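(* Let $m=2^l m_1$ with $l\ge0$ and $m_1$ odd (and $m\ge2$). Then $L_m(3)=l$.
   Context: The Ducci function $D:\mathbb{Z}_m^3\to\mathbb{Z}_m^3$ is $D(x_1,x_2,x_3)=(x_1+x_2,\,x_2+x_3,\,x_3+x_1)$, entries mod $m$. For $\mathbf{u}\in\mathbb{Z}_m^3$, $\mathrm{Len}(\mathbf{u})$ is the smallest $j\ge0$ such that $D^{j+k}(\mathbf{u})=D^j(\mathbf{u})$ for some $k\ge1$, and $L_m(3)=\mathrm{Len}(0,0,1)$. *)

From mathcomp Require Import all_boot all_algebra.
Set Implicit Arguments. Unset Strict Implicit. Unset Printing Implicit Defensive.
Import GRing.Theory.
Local Open Scope ring_scope.

(* Ducci function on Z_m^3 (Z_m = 'Z_m, faithful for 1 < m). *)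
Definition ducci (m : nat) (u : 'Z_m * 'Z_m * 'Z_m) : 'Z_m * 'Z_m * 'Z_m :=
  let: (x1, x2, x3) := u in (x1 + x2, x2 + x3, x3 + x1).

Definition periodic_from (m : nat) (u : 'Z_m * 'Z_m * 'Z_m) (j : nat) : Prop :=
  exists k : nat, (1 <= k)%N /\ iter (j + k) (ducci (m:=m)) u = iter j (ducci (m:=m)) u.

Definition is_Len (m : nat) (u : 'Z_m * 'Z_m * 'Z_m) (j : nat) : Prop :=
  periodic_from u j /\ forall i : nat, (i < j)%N -> ~ periodic_from u i.

Definition L3_is (m : nat) (j : nat) : Prop := is_Len (m:=m) (0, 0, 1) j.

(** The sum of the entries, s(u), doubles under the Ducci map, and D commutes
    with adding a constant vector up to doubling that constant.  A direct
    computation gives D^6 u = u + 21 s(u) (1,1,1), hence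
    D^(6t) u = u + c_t s(u) (1,1,1) with c_t = 21 (1 + 64 + ... + 64^(t-1)),
    so that 3 c_t = 64^t - 1.  For u = (0,0,1),
    D^(l+6t) u = D^l u + 2^l c_t (1,1,1), which vanishes mod m once
    t = phi(3 m1) by Euler's theorem: so Len(u) <= l.  Conversely, comparing
    sums, D^(i+k) u = D^i u forces 2^l | 2^i (2^k - 1), whence l <= i. *)

From mathcomp Require Import all_boot all_algebra all_solvable.
From mathcomp Require Import ring.
Import GRing.Theory.

Set Implicit Arguments.
Unset Strict Implicit.
Unset Printing Implicit Defensive.

Lemma leq_of_dvdn_exp2_subn (l i k : nat) :
  0 < k -> 2 ^ l %| 2 ^ (i + k) - 2 ^ i -> l <= i.
Proof.
move=> k_gt0; rewrite expnD -{2}[2 ^ i]muln1 -mulnBr Gauss_dvdl.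
  by rewrite dvdn_Pexp2l.
by rewrite coprimeXl // coprime2n oddB ?expn_gt0 // oddX; case: k k_gt0.
Qed.

Definition ducci6_coef (t : nat) : nat := 21 * \sum_(i < t) 64 ^ i.

Lemma dvdn_ducci6_coef_totient (n : nat) : odd n -> n %| ducci6_coef (totient (3 * n)).
Proof.
move=> n_odd; rewrite /ducci6_coef -(@dvdn_pmul2l 3) // mulnA -[(3 * 21)%N]/(64.-1) -predn_exp.
have co64 : coprime 64 (3 * n) by rewrite -[64]/(2 ^ 6) coprimeXl // coprimeMr !coprime2n n_odd.
by move/eqP: (Euler_exp_totient co64); rewrite eqn_mod_dvd ?expn_gt0 // subn1.
Qed.

Section DucciModM.

Variable m : nat.
Local Open Scope ring_scope.
Local Notation Z3 := ('Z_m * 'Z_m * 'Z_m)%type.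
Local Notation D := (ducci (m:=m)).

Definition sum3 (u : Z3) : 'Z_m := let: (a, b, c) := u in a + b + c.

Definition add_diag (u : Z3) (d : 'Z_m) : Z3 :=
  let: (a, b, c) := u in (a + d, b + d, c + d).

Lemma add_diag0 u : add_diag u 0 = u.
Proof. by case: u => [[a b] c] /=; rewrite !addr0. Qed.

Lemma add_diagA u d e : add_diag (add_diag u d) e = add_diag u (d + e).
Proof. by case: u => [[a b] c] /=; rewrite !addrA. Qed.

Lemma sum3_ducci u : sum3 (D u) = 2 * sum3 u.
Proof. by case: u => [[a b] c] /=; ring. Qed.

Lemma sum3_iter_ducci j u : sum3 (iter j D u) = 2 ^+ j * sum3 u.
Proof. by elim: j => [|j IHj] /=; rewrite ?mul1r // sum3_ducci IHj exprS mulrA. Qed.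

Lemma ducci_add_diag u d : D (add_diag u d) = add_diag (D u) (2 * d).
Proof. by case: u => [[a b] c] /=; congr (_, _, _); ring. Qed.

Lemma iter_ducci_add_diag j u d :
  iter j D (add_diag u d) = add_diag (iter j D u) (2 ^+ j * d).
Proof.
elim: j => [|j IHj] /=; first by rewrite mul1r.
by rewrite IHj ducci_add_diag exprS mulrA.
Qed.

Lemma iter6_ducci u : iter 6 D u = add_diag u (21 * sum3 u).
Proof. by case: u => [[a b] c] /=; congr (_, _, _); ring. Qed.

Lemma iter6_mul_ducci t u :
  iter (6 * t) D u = add_diag u ((ducci6_coef t)%:R * sum3 u).
Proof.
elim: t => [|t IHt]; first by rewrite /ducci6_coef big_ord0 mul0r add_diag0.
rewrite mulnS addnC iterD iter6_ducci iter_ducci_add_diag IHt add_diagA exprM.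
rewrite /ducci6_coef big_ord_recr /= mulnDr; congr add_diag.
have -> : 2 ^+ 6 = 64 :> 'Z_m by ring.
rewrite natrD !natrM natrX; ring.
Qed.

Hypothesis m_gt1 : (1 < m)%N.

Lemma Zp_natr_eq0 n : ((n%:R : 'Z_m) == 0) = (m %| n)%N.
Proof. by rewrite -val_eqE /= val_Zp_nat. Qed.

Lemma iter_ducci_periodic j t u :
  (m %| 2 ^ j * ducci6_coef t)%N -> iter (j + 6 * t) D u = iter j D u.
Proof.
rewrite -Zp_natr_eq0 => /eqP c0.
by rewrite iterD iter6_mul_ducci iter_ducci_add_diag mulrA -natrX -natrM c0 mul0r add_diag0.
Qed.

Lemma dvdn_sub_exp2_of_iter_ducci i k u : sum3 u = 1 ->
  iter (i + k) D u = iter i D u -> (m %| 2 ^ (i + k) - 2 ^ i)%N.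
Proof.
move=> u1 /(congr1 sum3); rewrite !sum3_iter_ducci u1 !mulr1 -!natrX => /eqP.
by rewrite -subr_eq0 -natrB ?leq_pexp2l ?leq_addr // Zp_natr_eq0.
Qed.

End DucciModM.

Theorem theorem4p1 (m l m1 : nat) (hm : (2 <= m)%N) (hm1 : odd m1)
  (hdec : m = (2 ^ l * m1)%N) : L3_is m l.
Proof.
have m1_gt0 : (0 < m1)%N by rewrite lt0n; apply: contraTneq hm1 => ->.
split.
  exists (6 * totient (3 * m1))%N; split.
    by rewrite muln_gt0 totient_gt0 muln_gt0 m1_gt0.
  apply: iter_ducci_periodic => //.
  by rewrite hdec dvdn_pmul2l ?expn_gt0 // dvdn_ducci6_coef_totient.
have sum3_e3 : sum3 ((0, 0, 1) : 'Z_m * 'Z_m * 'Z_m)%R = 1%R by rewrite /= !add0r.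
have pow2l_dvd_m : (2 ^ l %| m)%N by rewrite hdec dvdn_mulr.
move=> i lt_il [k [k_gt0 /(dvdn_sub_exp2_of_iter_ducci hm sum3_e3) m_dvd]].
have := leq_of_dvdn_exp2_subn k_gt0 (dvdn_trans pow2l_dvd_m m_dvd).
by rewrite leqNgt lt_il.
Qed.
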